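(* Let $G$ be a finite abelian group, let $t\ge2$, and let $H_1,\dots,H_t$ be distinct subgroups of $G$ and $D$ a subgroup with $H_i\cap H_j=D$ for all $i\neq j$ and $|H_i:D|>2$ for all $1\le i\le t$. Let $H=H_1+\dots+H_t$. Let $\mathcal{A}$ consist of the following subsets of $G$: (1) $A_i=H_i\setminus D$ for $1\le i\le t$; (2) all cosets of $D$ that are contained in $H$ but not contained in $H_1\cup\dots\cup H_t$; (3) for some chosen set (possibly empty) of cosets of $H$ different from $H$ itself, all the cosets of $D$ lying within those cosets of $H$. Then $\mathcal{A}$ is a bimodal collection of pairwise disjoint subsets of $G$; moreover, the members $S$ of $\mathcal{A}$ with $|S|$ smaller than the order of the internal difference group of $S$ are exactly $A_1,\dots,A_t$, the internal difference group of $A_i$ is $H_i$, and $(H_i)\setminus A_i=D$ is a subgroup (so $\mathcal{A}$ is in canonical position).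
   Context: $G$ is written additively. The internal difference group of a subset $S\subseteq G$ is the subgroup generated by all $x-y$ with $x,y\in S$. A collection $\{A_1,\dots,A_m\}$ of pairwise disjoint subsets of $G$ is bimodal if for every $i$ and every $\delta\in G\setminus\{0\}$, the number $N_i(\delta)$ of pairs $(a,b)$ with $a\in A_i$, $b\in A_j$ for some $j\neq i$, and $a-b=\delta$, satisfies $N_i(\delta)\in\{0,|A_i|\}$. *)

(* The finite abelian group G is a finGroupType gT with
   [set: gT] abelian; the paper's additive notation x - y is written x * y^-1. *)
From mathcomp Require Import all_boot all_fingroup.
Set Implicit Arguments. Unset Strict Implicit. Unset Printing Implicit Defensive.
Local Open Scope group_scope.

Definition diff_group (gT : finGroupType) (S : {set gT}) : {set gT} :=
  <<[set x * y^-1 | x in S, y in S]>>.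

Definition Ncount (gT : finGroupType) (P : {set {set gT}}) (A : {set gT})
    (delta : gT) : nat :=
  #|[set ab : gT * gT | (ab.1 \in A) && (ab.2 \in cover (P :\ A))
                         && (ab.1 * ab.2^-1 == delta)]|.

Definition bimodal (gT : finGroupType) (P : {set {set gT}}) : Prop :=
  trivIset P /\
  forall A, A \in P -> forall delta : gT, delta != 1 ->
    Ncount P A delta = 0 \/ Ncount P A delta = #|A|.

From mathcomp Require Import all_boot all_fingroup zify.
Local Open Scope group_scope.

(* Each member S of the collection lies in a left coset of a subgroup K (K = H_i
   for A_i, K = D for the D-cosets) such that the union of the other members is
   a union of left cosets of K.  For a, b in S the element d^-1 b = (d^-1 a)
   (a^-1 b) then lies in another member exactly when d^-1 a does, so N_S(d) is
   0 or |S|.  The union of all members is (H \ D) ∪ W, where W is the union of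
   the chosen H-cosets and misses H; removing A_i leaves (H \ H_i) ∪ W, and
   removing a D-coset leaves a union of D-cosets.  A D-coset has its difference
   group inside D, whereas |H_i : D| > 2 gives |A_i| > |D|, so every h in H_i
   is a difference (h a) a^-1 of two elements of A_i. *)

Definition right_invariant {gT : finGroupType} (K V : {set gT}) : Prop :=
  forall x k, k \in K -> (x * k \in V) = (x \in V).

Section GroupFacts.
Context {gT : finGroupType}.
Implicit Types (K L D : {group gT}) (V W S : {set gT}) (P : {set {set gT}}).

Lemma right_invariant_group K L : L \subset K -> right_invariant L K.
Proof. by move=> sLK x k /(subsetP sLK) kK; rewrite groupMr. Qed.

Lemma right_invariant_lcoset K y : right_invariant K (y *: K).
Proof. by move=> x k kK; rewrite !mem_lcoset mulgA groupMr. Qed.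

Lemma right_invariantS K L V :
  L \subset K -> right_invariant K V -> right_invariant L V.
Proof. by move=> sLK invV x k /(subsetP sLK); apply: invV. Qed.

Lemma right_invariantU K V W :
  right_invariant K V -> right_invariant K W -> right_invariant K (V :|: W).
Proof. by move=> invV invW x k kK; rewrite !inE invV ?invW. Qed.

Lemma right_invariantD K V W :
  right_invariant K V -> right_invariant K W -> right_invariant K (V :\: W).
Proof. by move=> invV invW x k kK; rewrite !inE invV ?invW. Qed.

Lemma right_invariant_cover K (P : {set {set gT}}) :
  {in P, forall V, right_invariant K V} -> right_invariant K (cover P).
Proof.
move=> invP x k kK; apply/bigcupP/bigcupP => -[V PV xV]; exists V => //.
  by rewrite -(invP V PV x k kK).
by rewrite (invP V PV x k kK).
Qed.

Lemma NcountE P S d :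
  Ncount P S d = #|[set a in S | d^-1 * a \in cover (P :\ S)]|.
Proof.
have inj_pair : injective (fun a => (a, d^-1 * a)) by move=> a b [].
rewrite /Ncount -(card_imset _ inj_pair); apply: eq_card => -[a b].
rewrite inE /=; apply/andP/imsetP => /=.
  case=> /andP[aS bV] /eqP <-; exists a; last by rewrite invMg invgK mulgKV.
  by rewrite inE aS invMg invgK mulgKV.
case=> a' /[!inE] /andP[a'S a'V] [-> ->].
by rewrite a'S a'V invMg invgK mulKVg eqxx.
Qed.

Lemma card_set_const (T : finType) (S : {set T}) (p : pred T) :
  {in S &, forall a b, p a = p b} ->
  #|[set a in S | p a]| = 0 \/ #|[set a in S | p a]| = #|S|.
Proof.
move=> p_const; case: (boolP [exists a in S, p a]) => [/existsP[a /andP[aS pa]]|].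
  right; apply: eq_card => b; rewrite inE.
  by case bS: (b \in S); rewrite //= (p_const b a bS aS).
move/exists_inPn => no_p; left; apply/eqP; rewrite cards_eq0; apply/eqP/setP => b.
by rewrite !inE; case bS: (b \in S); rewrite //= (negbTE (no_p b bS)).
Qed.

Lemma bimodal_of_right_invariant P :
  trivIset P ->
  (forall S, S \in P -> exists (K : {group gT}) (y : gT),
     S \subset y *: K /\ right_invariant K (cover P :\: S)) ->
  bimodal P.
Proof.
move=> tiP invP; split=> // S PS d _.
have [K [y [sSyK invK]]] := invP S PS.
rewrite NcountE coverD1 //; apply: card_set_const => a b aS bS.
have abK : a^-1 * b \in K.
  have /[!mem_lcoset] yaK := subsetP sSyK a aS.
  have /[!mem_lcoset] ybK := subsetP sSyK b bS.
  have -> : a^-1 * b = (y^-1 * a)^-1 * (y^-1 * b).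
    by rewrite invMg invgK mulgA mulgK.
  by rewrite groupM ?groupV.
by rewrite -(invK (d^-1 * a) _ abK) mulgA mulgK.
Qed.

Lemma diff_group_rcoset_sub D y : diff_group (D :* y) \subset D.
Proof.
rewrite gen_subG; apply/subsetP => _ /imset2P[a b /[!mem_rcoset] aD bD ->].
have -> : a * b^-1 = (a * y^-1) * (b * y^-1)^-1.
  by rewrite invMg invgK mulgA mulgKV.
by rewrite groupM ?groupV.
Qed.

Lemma diff_group_setD K D :
  D \subset K -> 2 < #|K : D| -> diff_group (K :\: D) = K.
Proof.
move=> sDK idxD; apply/eqP; rewrite eqEsubset; apply/andP; split.
  rewrite gen_subG; apply/subsetP => _ /imset2P[a b /setDP[aK _] /setDP[bK _] ->].
  by rewrite groupM ?groupV.
apply/subsetP => h hK.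
have ltD_KD : #|D| < #|K :\: D|.
  have D_gt0 := cardG_gt0 D.
  have : #|D| * 3 <= #|D| * #|K : D| by rewrite leq_mul2l idxD orbT.
  rewrite cardsDS // -(Lagrange sDK); lia.
have /subsetPn[a aKD haD] : ~~ (K :\: D \subset h^-1 *: D).
  by apply/negP => /subset_leq_card; rewrite card_lcoset leqNgt ltD_KD.
have /setDP[aK _] := aKD; rewrite mem_lcoset invgK in haD.
rewrite -(mulgK a h) mem_gen //; apply/imset2P; exists (h * a) a => //.
by rewrite inE haD groupM.
Qed.

End GroupFacts.

Section CanonicalCollection.
Context {gT : finGroupType} {t : nat} (Hs : 'I_t -> {group gT}) (D : {group gT})
  (C : {set {set gT}}).
Hypothesis cGG : abelian [set: gT].
Hypothesis t_gt1 : 1 < t.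
Hypothesis HsD : forall i j, i != j -> Hs i :&: Hs j = D.

Local Notation U := (\bigcup_(i < t) Hs i).
Local Notation H := <<U>>.
Local Notation A i := (Hs i :\: D).
Local Notation Aset := [set A i | i : 'I_t].
Local Notation Dcosets_H := [set X in rcosets D H | ~~ (X \subset U)].
Local Notation Dcosets_C :=
  [set X in rcosets D [set: gT] | [exists Y in C, X \subset Y]].
Local Notation calA := (Aset :|: Dcosets_H :|: Dcosets_C).

Hypothesis CH : C \subset rcosets H [set: gT].
Hypothesis HnC : H \notin C.

Lemma rcoset_lcoset (K : {group gT}) y : K :* y = y *: K.
Proof.
apply: norm_rlcoset; apply: (subsetP (cent_sub K)).
exact: subsetP (sub_abelian_cent cGG (subsetT K)) y (in_setT y).
Qed.

Lemma sub_D_Hs i : D \subset Hs i.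
Proof.
have [j ji] : exists j : 'I_t, j != i.
  have [-> | ] := eqVneq i (Ordinal (ltnW t_gt1)).
    by exists (Ordinal t_gt1).
  by exists (Ordinal (ltnW t_gt1)); rewrite eq_sym.
by rewrite -(HsD _ _ ji) subsetIr.
Qed.

Lemma sub_Hs_H i : Hs i \subset H.
Proof. by apply/subsetP => x xHi; apply/mem_gen/bigcupP; exists i. Qed.

Lemma sub_D_U : D \subset U.
Proof.
by apply/subsetP => x xD; apply/bigcupP; exists (Ordinal (ltnW t_gt1));
  rewrite // (subsetP (sub_D_Hs _)).
Qed.

Lemma sub_D_H : D \subset H.
Proof. exact: subset_trans (sub_D_Hs (Ordinal (ltnW t_gt1))) (sub_Hs_H _). Qed.

Lemma cover_Aset : cover Aset = U :\: D.
Proof.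
rewrite cover_imset; apply/setP => x; rewrite inE.
apply/bigcupP/andP => [[i _ /setDP[xHi xD]] | [xD /bigcupP[i _ xHi]]].
  by split=> //; apply/bigcupP; exists i.
by exists i; rewrite // inE xD.
Qed.

Lemma cover_Dcosets_H : cover Dcosets_H = H :\: U.
Proof.
apply/setP => x; rewrite inE; apply/bigcupP/andP.
  case=> _ /setIdP[/rcosetsP[y yH ->] notsubU] xDy; split.
    apply: contra notsubU => /bigcupP[i _ xHi]; rewrite -(rcoset_eqP xDy).
    apply: subset_trans (bigcup_sup i isT).
    by rewrite -(rcoset_id xHi) mulSg ?sub_D_Hs.
  by rewrite -(mulgKV y x) groupM // (subsetP sub_D_H) // -mem_rcoset.
case=> xU xH; exists (D :* x); last exact: rcoset_refl.
rewrite inE mem_rcosets mulSGid ?xH //; last exact: sub_D_H.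
by apply: contra xU => /subsetP; apply; exact: rcoset_refl.
Qed.

Lemma cover_C_notin_H x : x \in cover C -> x \notin H.
Proof.
case/bigcupP=> Y CY xY; apply: contraNN HnC => xH.
have /rcosetsP[y _ defY] := subsetP CH Y CY.
by rewrite -(rcoset_id xH) (rcoset_eqP (_ : x \in H :* y)) -?defY.
Qed.

Lemma right_invariant_cover_C : right_invariant H (cover C).
Proof.
apply: right_invariant_cover => Y /(subsetP CH) /rcosetsP[y _ ->].
rewrite rcoset_lcoset; exact: right_invariant_lcoset.
Qed.

Lemma cover_Dcosets_C : cover Dcosets_C = cover C.
Proof.
apply/setP => x; apply/bigcupP/bigcupP.
  case=> X /setIdP[_ /exists_inP[Y CY sXY]] xX.
  by exists Y; rewrite // (subsetP sXY).
case=> Y CY xY; exists (D :* x); last exact: rcoset_refl.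
rewrite inE mem_rcosets mulSGid ?subsetT ?inE //=; apply/exists_inP; exists Y => //.
have /rcosetsP[y _ defY] := subsetP CH Y CY.
by rewrite defY -(rcoset_eqP (_ : x \in H :* y)) -?defY // mulSg ?sub_D_H.
Qed.

Lemma cover_calA : cover calA = (H :\: D) :|: cover C.
Proof.
rewrite /cover !bigcup_setU -!/(cover _).
rewrite cover_Aset cover_Dcosets_H cover_Dcosets_C; congr (_ :|: _).
apply/setP => x; rewrite !inE.
case xU: (x \in U); first by rewrite mem_gen // orbF andbT.
by rewrite (contraFN (subsetP sub_D_U x) xU).
Qed.

Lemma trivIset_calA : trivIset calA.
Proof.
rewrite -setUA; apply: trivIsetU.
- apply/trivIsetP => _ _ /imsetP[i _ ->] /imsetP[j _ ->] neqAij.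
  have ij : i != j by apply: contraNneq neqAij => ->.
  by rewrite -setI_eq0 -setDIl HsD // setDv.
- apply: trivIsetS (partition_trivIset (rcosets_partition (subsetT D))).
  apply/subsetP => X /setUP[] /setIdP[XD _] //.
  exact: subsetP (imsetS _ (subsetT H)) X XD.
rewrite /cover bigcup_setU -!/(cover _) cover_Aset cover_Dcosets_H cover_Dcosets_C.
rewrite -setI_eq0; apply/eqP/setP => x; rewrite !inE.
apply/negP => /andP[/andP[_ xU] /orP[/andP[xnU _] | /cover_C_notin_H xnH]].
  by rewrite xU in xnU.
by rewrite mem_gen in xnH.
Qed.

Lemma calA_memP S :
  S \in calA -> (exists i, S = A i) \/ (exists y, S = D :* y).
Proof.
case/setUP => [/setUP[/imsetP[i _ ->] | /setIdP[/rcosetsP[y _ ->] _]] |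
               /setIdP[/rcosetsP[y _ ->] _]].
- by left; exists i.
all: by right; exists y.
Qed.

Lemma cover_calA_setD_A i : cover calA :\: A i = (H :\: Hs i) :|: cover C.
Proof.
apply/setP => x; rewrite cover_calA !inE.
case xH: (x \in H); last first.
  by rewrite (contraFF (subsetP (sub_Hs_H i) x) xH) !andbF.
rewrite (contraTF (@cover_C_notin_H x) xH) !orbF !andbT.
case xD: (x \in D); last by rewrite andbT.
by rewrite (subsetP (sub_D_Hs i) x xD).
Qed.

Lemma right_invariant_cover_calA : right_invariant D (cover calA).
Proof.
rewrite cover_calA; apply: right_invariantU.
  by apply: right_invariantD; apply: right_invariant_group; rewrite ?sub_D_H.
exact: right_invariantS sub_D_H right_invariant_cover_C.
Qed.

Lemma bimodal_calA : bimodal calA.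
Proof.
apply: bimodal_of_right_invariant; first exact: trivIset_calA.
move=> S /calA_memP[[i ->] | [y ->]].
  exists (Hs i), 1; rewrite lcoset1 subsetDl cover_calA_setD_A; split=> //.
  apply: right_invariantU.
    by apply: right_invariantD; apply: right_invariant_group; rewrite ?sub_Hs_H.
  exact: right_invariantS (sub_Hs_H i) right_invariant_cover_C.
exists D, y; rewrite rcoset_lcoset; split=> //.
exact: right_invariantD right_invariant_cover_calA (right_invariant_lcoset D y).
Qed.

Hypothesis idxD : forall i, 2 < #|Hs i : D|.

Lemma small_members_calA :
  [set S in calA | #|S| < #|diff_group S|] = Aset.
Proof.
apply/setP => S; rewrite inE; apply/andP/idP => [[/calA_memP[[i ->] | [y ->]]] | ].
- by move=> _; apply: imset_f.
- by rewrite card_rcoset ltnNge subset_leq_card ?diff_group_rcoset_sub.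
case/imsetP=> i _ ->; split; first by rewrite -setUA; apply/setUP; left; apply: imset_f.
rewrite diff_group_setD ?sub_D_Hs //; apply: proper_card; rewrite properEneq subsetDl.
by apply/andP; split=> //; apply/eqP/setP => /(_ 1); rewrite !inE !group1.
Qed.

End CanonicalCollection.

Theorem theorem3p11 (gT : finGroupType) (t : nat) (Hs : 'I_t -> {group gT})
    (D : {group gT}) (C : {set {set gT}}) :
  abelian [set: gT] ->
  2 <= t ->
  injective Hs ->
  (forall i j, i != j -> Hs i :&: Hs j = D) ->
  (forall i, 2 < #|Hs i : D|) ->
  let H := <<\bigcup_(i < t) Hs i>> in
  C \subset rcosets H [set: gT] ->
  H \notin C ->
  let A := fun i => Hs i :\: D in
  let calA :=
    [set A i | i : 'I_t]
    :|: [set X in rcosets D H | ~~ (X \subset \bigcup_(i < t) Hs i)]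
    :|: [set X in rcosets D [set: gT] | [exists Y in C, X \subset Y]] in
  [/\ bimodal calA,
      [set S in calA | #|S| < #|diff_group S| ] = [set A i | i : 'I_t],
      forall i, diff_group (A i) = Hs i
    & forall i, Hs i :\: A i = D].
Proof.
move=> cGG t_gt1 _ HsD idxD H CH HnC A calA.
have sDHs := sub_D_Hs _ _ t_gt1 HsD.
split.
- exact: bimodal_calA.
- exact: small_members_calA.
- by move=> i; apply: diff_group_setD.
- by move=> i; rewrite /A setDDr setDv set0U; apply/setIidPr.
Qed.
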